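(* In $\mathrm{PG}(4,q)$ let $\alpha$ be a plane not contained in $\Sigma_\infty$ and containing no line of $\mathcal S$, and let $\mathcal N$ be a non-degenerate conic in $\alpha$. Then: (1) there is a Baer subplane $\mathcal B$ of $\mathrm{PG}(2,q^2)$ secant to $\ell_\infty$ with $[\mathcal B]=\alpha$, and an $\mathbb F_q$-conic $\mathcal C$ in $\mathcal B$ with $[\mathcal C]=\mathcal N$; (2) if $\mathcal N$ meets $\Sigma_\infty$ in a point of the spread line $[T]$, then $\bar T\in\mathcal C$; (3) if $\mathcal N$ is a $(PQ^q)$-special conic for distinct points $P,Q\in g$, then the $\mathbb F_{q^2}$-conic $\mathcal C^+$ meets $\ell_\infty$ in the points $\bar P,\bar Q$.
   Context: Bruck–Bose setting: $q$ a prime power; $\Sigma_\infty$ a hyperplane of $\mathrm{PG}(4,q)$ with regular spread $\mathcal S$; affine points $A$ of $\mathrm{PG}(2,q^2)$ correspond to points $[A]$ of $\mathrm{PG}(4,q)\setminus\Sigma_\infty$, points $\bar T\in\ell_\infty$ to spread lines $[T]$, lines $\ne\ell_\infty$ to planes not in $\Sigma_\infty$ containing a spread line. In $\mathrm{PG}(4,q^2)$ the transversals of $\mathcal S$ are conjugate lines $g,g^q$ (conjugation $X\mapsto X^q$ on coordinates) with $[T]^\star=TT^q$, $T=[T]^\star\cap g$, giving a bijection $\bar T\leftrightarrow T$ between $\ell_\infty$ and $g$; $\mathcal V^\star$ denotes the extension to $\mathrm{PG}(4,q^2)$. An $\mathbb F_{q^2}$-conic is a non-degenerate conic of $\mathrm{PG}(2,q^2)$;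 an $\mathbb F_q$-conic is a non-degenerate conic of a Baer subplane; $\mathcal C^+$ is the unique $\mathbb F_{q^2}$-conic containing the $\mathbb F_q$-conic $\mathcal C$. For a Baer subplane $\mathcal B$ secant to $\ell_\infty$, $[\mathcal B]$ is the plane of $\mathrm{PG}(4,q)$ whose affine points are $[X]$, $X$ affine in $\mathcal B$; for $\mathcal C\subset \mathcal B$, $[\mathcal C]$ is the closure in $[\mathcal B]$ of $\{[X]:X\in\mathcal C\text{ affine}\}$. A non-degenerate conic $\mathcal N$ of $\mathrm{PG}(4,q)$ is $(PQ^q)$-special if $\mathcal N^\star$ contains one point of the line $PQ^q$ and one point of the line $P^qQ$. *)

From HB Require Import structures.
From mathcomp Require Import all_boot all_order all_algebra all_field.
Set Implicit Arguments. Unset Strict Implicit. Unset Printing Implicit Defensive.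
Import GRing.Theory.
Local Open Scope ring_scope.

Section BB.
Variables (F : finFieldType) (K : fieldExtType F) (e : 2.-tuple K).

Definition emb (a : F) : K := in_alg K a.
Definition conjK (x : K) : K := x ^+ #|F|.
Definition conjv (m n : nat) (X : 'M[K]_(m, n)) := map_mx conjK X.
Definition embm (m n : nat) (X : 'M[F]_(m, n)) : 'M[K]_(m, n) := map_mx emb X.

Definition c0 (x : K) : F := coord e ord0 x.
Definition c1 (x : K) : F := coord e ord_max x.

Definition bbv (x y : K) (t : F) : 'rV[F]_5 :=
  \row_(k < 5) match val k with
               | 0 => c0 x | 1 => c1 x | 2 => c0 y | 3 => c1 y | _ => t end.

(* Bruck--Bose image [X] of an affine point X = (x:y:z), z <> 0, of PG(2,q^2) *)
Definition bbA (X : 'rV[K]_3) : 'rV[F]_5 :=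
  bbv (X 0 0 / X 0 2) (X 0 1 / X 0 2) 1.

(* the spread line [T] (2 x 5 matrix, rows spanning it) of the point
   T = (x:y:0) of l_infinity *)
Definition spreadline (X : 'rV[K]_3) : 'M[F]_(2, 5) :=
  \matrix_(i < 2) bbv (tnth e i * X 0 0) (tnth e i * X 0 1) 0.

(* matrix (row convention) of the F-linear map "multiplication by x" on
   K^2 = F^4 = Sigma_infinity, extended by 0 on the last coordinate *)
Definition mulrow (x : K) (i : 'I_5) : 'rV[F]_5 :=
  match val i with
  | 0 => bbv (x * tnth e ord0) 0 0
  | 1 => bbv (x * tnth e ord_max) 0 0
  | 2 => bbv 0 (x * tnth e ord0) 0
  | 3 => bbv 0 (x * tnth e ord_max) 0
  | _ => 0 end.
Definition mulmx5 (x : K) : 'M[F]_5 := \matrix_(i < 5) mulrow x i.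

(* the transversal g of the regular spread in PG(4,q^2): the points of
   Sigma_infinity^* on which every multiplication map acts as the scalar x
   (its conjugate g^q is the eigenspace for x^q) *)
Definition in_g (P : 'rV[K]_5) : Prop :=
  P 0 4 = 0 /\ forall x : K, P *m embm (mulmx5 x) = x *: P.

(* bijection l_infinity <-> g : Tbar = X corresponds to T = P iff
   P lies on [X]^* *)
Definition bar_of (X : 'rV[K]_3) (P : 'rV[K]_5) : bool :=
  (P <= embm (spreadline X))%MS.

End BB.

Definition qf (R : comNzRingType) (Qm : 'M[R]_3) (u : 'rV[R]_3) : R :=
  (u *m Qm *m u^T) 0 0.

(* non-degeneracy of the conic aX^2+bY^2+cZ^2+fYZ+gXZ+hXY = 0
   (characteristic-free discriminant 4abc + fgh - af^2 - bg^2 - ch^2) *)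
Definition conic_nondeg (R : comNzRingType) (Qm : 'M[R]_3) : bool :=
  let a := Qm 0 0 in let b := Qm 1 1 in let c := Qm 2 2 in
  let h := Qm 0 1 + Qm 1 0 in let g := Qm 0 2 + Qm 2 0 in
  let f := Qm 1 2 + Qm 2 1 in
  4 * a * b * c + f * g * h - a * f ^+ 2 - b * g ^+ 2 - c * h ^+ 2 != 0.

Arguments emb {F K} a.
Arguments embm {F K m n} X.
Arguments conjK {F K} x.
Arguments conjv {F K m n} X.

From Pilot Require Import Defs.
From HB Require Import structures.
From mathcomp Require Import all_boot all_order all_algebra all_field.
From mathcomp Require Import ring.
Import GRing.Theory.
Local Open Scope ring_scope.
Set Implicit Arguments. Unset Strict Implicit. Unset Printing Implicit Defensive.

(* The K-linear map Pi : K^5 -> K^3,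
   (x0, x1, y0, y1, t) |-> (x0 e0 + x1 e1, y0 e0 + y1 e1, t), inverts the
   Bruck--Bose coordinatisation, and its conjugate conjv Pi sends the same
   vector to (x^q, y^q, t); jointly they are injective because
   delta = e0 e1^q - e1 e0^q is nonzero.  The transversal g is killed by
   conjv Pi, so Pi identifies g with l_infinity, and a point P of g lies on
   the extended spread line [X]^* iff P Pi is the point X.

   We take B = {w *m baerM} with baerM = A *m Pi (A spans alpha) and C the
   conic of B with the matrix of N.  Part (1): baerM is invertible since a
   K-point of alpha^* killed by Pi would put a spread line in alpha; the
   points of B are normalisations of points of alpha, and likewise for C.  Part (3): the hypotheses give
   points u1, u2 of C^+ with u1 baerM ~ P Pi and u2 baerM ~ Q Pi on
   l_infinity; a non-degenerate conic meets the line l_infinity in at most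
   these two points. *)

Lemma sum2E (V : nmodType) (f : 'I_2 -> V) : \sum_i f i = f 0 + f 1.
Proof.
by rewrite !big_ord_recr big_ord0 /= add0r; do ! congr (_ + _); congr f; apply: val_inj.
Qed.

Lemma sum3E (V : nmodType) (f : 'I_3 -> V) : \sum_i f i = f 0 + f 1 + f 2.
Proof.
by rewrite !big_ord_recr big_ord0 /= add0r; do ! congr (_ + _); congr f; apply: val_inj.
Qed.

Lemma sum5E (V : nmodType) (f : 'I_5 -> V) :
  \sum_i f i = f 0 + f 1 + f 2 + f 3 + f 4.
Proof.
by rewrite !big_ord_recr big_ord0 /= add0r; do ! congr (_ + _); congr f; apply: val_inj.
Qed.

Lemma ord3P (i : 'I_3) : [\/ i = 0, i = 1 | i = 2].
Proof.
by case: i => [[|[|[|]]] hi] //; [constructor 1|constructor 2|constructor 3]; apply: val_inj.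
Qed.

Section RowSpaces.
Variable R : fieldType.

Lemma rV_sub_sym n (u v : 'rV[R]_n) : u != 0 -> (u <= v)%MS -> (v <= u)%MS.
Proof.
move=> nu uv; have nv : v != 0.
  by apply: contraNneq nu => v0; move: uv; rewrite v0 => /submx0null ->.
by rewrite -(mxrank_leqif_sup uv).2 !rank_rV nu nv.
Qed.

Lemma sub_rV_scale n (x z : 'rV[R]_n) : (x <= z)%MS -> exists k : R, x = k *: z.
Proof. by case/submxP => D ->; exists (D 0 0); rewrite {1}(mx11_scalar D) mul_scalar_mx. Qed.

Lemma sub_col_mx2 n (p q z : 'rV[R]_n) :
  (z <= col_mx p q)%MS -> exists a b : R, z = a *: p + b *: q.
Proof.
case/submxP => D ->; rewrite -[D]hsubmxK mul_row_col.
exists (lsubmx D 0 0), (rsubmx D 0 0).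
by rewrite {1}(mx11_scalar (lsubmx D)) {1}(mx11_scalar (rsubmx D)) !mul_scalar_mx.
Qed.

Lemma col_mx_subC n (p q z : 'rV[R]_n) :
  (z <= col_mx p q)%MS = (z <= col_mx q p)%MS.
Proof. by rewrite -!addsmxE addsmxC. Qed.

Lemma rV_sub_entry0 n (x z : 'rV[R]_n) j :
  x != 0 -> (x <= z)%MS -> x 0 j = 0 -> z 0 j = 0.
Proof.
move=> nx /(rV_sub_sym nx) /sub_rV_scale [k ->] hx.
by rewrite mxE hx mulr0.
Qed.

Lemma mul_col_eq0 m n (z : 'rV[R]_m) (N : 'M[R]_(m, n)) j :
  (z *m col j N == 0) = ((z *m N) 0 j == 0).
Proof.
rewrite colE mulmxA -colE; apply/eqP/eqP => [/colP/(_ 0) | h]; first by rewrite !mxE.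
by apply/colP => i; rewrite ord1 [LHS]mxE h mxE.
Qed.

Lemma rank_col_mx2 n (u v : 'rV[R]_n) :
  u != 0 -> ~~ (v <= u)%MS -> \rank (col_mx u v) = 2%N.
Proof.
move=> nu vu; apply/eqP; rewrite eqn_leq rank_leq_row -addsmxE.
have lt_u : (u < u + v)%MS by rewrite ltmxE addsmxSl addsmx_sub submx_refl.
by have := rank_ltmx lt_u; rewrite rank_rV nu.
Qed.

Lemma two_indep_rows m n (B : 'M[R]_(m, n)) : (1 < \rank B)%N ->
  exists w1 w2 : 'rV[R]_n,
    [/\ (w1 <= B)%MS, (w2 <= B)%MS & \rank (col_mx w1 w2) = 2%N].
Proof.
move=> rB; have nB : B != 0 by rewrite -mxrank_eq0 -lt0n ltnW.
have : ~~ (B <= nz_row B)%MS.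
  by apply: contraL rB => /mxrankS; rewrite rank_rV nz_row_eq0 nB -leqNgt.
case/row_subPn => i hi; exists (nz_row B), (row i B).
by rewrite nz_row_sub row_sub rank_col_mx2 ?nz_row_eq0.
Qed.

Lemma rank_kermx_col3 (c : 'cV[R]_3) : c != 0 -> \rank (kermx c) = 2%N.
Proof.
move=> nc; rewrite mxrank_ker; have : (\rank c <= 1)%N := rank_leq_col c.
by rewrite leq_eqVlt ltnS leqn0 mxrank_eq0 (negbTE nc) orbF => /eqP ->.
Qed.

Lemma sub_kernel_plane (c : 'cV[R]_3) (u1 u2 w : 'rV[R]_3) : c != 0 ->
  \rank (col_mx u1 u2) = 2%N -> u1 *m c = 0 -> u2 *m c = 0 -> w *m c = 0 ->
  (w <= col_mx u1 u2)%MS.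
Proof.
move=> nc r12 h1 h2 hw.
have sub12 : (col_mx u1 u2 <= kermx c)%MS by rewrite sub_kermx mul_col_mx h1 h2 col_mx0.
have kerS : (kermx c <= col_mx u1 u2)%MS.
  by rewrite -(mxrank_leqif_sup sub12).2 r12 rank_kermx_col3.
by apply: submx_trans kerS; rewrite sub_kermx hw.
Qed.

End RowSpaces.

Section QuadraticForms.
Variable R : comNzRingType.
Implicit Types (Q : 'M[R]_3) (u v : 'rV[R]_3).

Definition bil Q u v : R := (u *m Q *m v^T) 0 0.

Lemma bilE Q u v : bil Q u v = \sum_i \sum_j u 0 i * Q i j * v 0 j.
Proof.
rewrite /bil mxE [RHS]exchange_big; apply: eq_bigr => j _.
by rewrite !mxE mulr_suml; apply: eq_bigr => i _; rewrite ?mxE.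
Qed.

Lemma qf_bil Q u : qf Q u = bil Q u u.
Proof. by []. Qed.

Definition polar Q u v := bil Q u v + bil Q v u.

Lemma qf_comb Q u v (a b : R) :
  qf Q (a *: u + b *: v) = a ^+ 2 * qf Q u + b ^+ 2 * qf Q v + a * b * polar Q u v.
Proof. by rewrite /polar !qf_bil !bilE !sum3E !mxE; ring. Qed.

Definition gram_disc (a b c h g f : R) :=
  4 * a * b * c + f * g * h - a * f ^+ 2 - b * g ^+ 2 - c * h ^+ 2.

Definition disc Q :=
  gram_disc (Q 0 0) (Q 1 1) (Q 2 2) (Q 0 1 + Q 1 0) (Q 0 2 + Q 2 0) (Q 1 2 + Q 2 1).

Lemma conic_nondegE Q : conic_nondeg Q = (disc Q != 0).
Proof. by []. Qed.

Definition cross u v : 'rV[R]_3 :=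
  \row_(k < 3) match val k with
               | 0 => u 0 1 * v 0 2 - u 0 2 * v 0 1
               | 1 => u 0 2 * v 0 0 - u 0 0 * v 0 2
               | _ => u 0 0 * v 0 1 - u 0 1 * v 0 0 end.

(* the discriminant of Q in the frame (u, v, e_k) is det(u, v, e_k)^2 times
   the discriminant of Q *)
Lemma disc_frame Q u v (k : 'I_3) :
  let ek : 'rV[R]_3 := delta_mx 0 k in
  cross u v 0 k ^+ 2 * disc Q =
  gram_disc (qf Q u) (qf Q v) (Q k k) (polar Q u v) (polar Q u ek) (polar Q v ek).
Proof.
rewrite /polar !qf_bil !bilE !sum3E /disc /gram_disc.
by case: (ord3P k) => ->; rewrite !mxE /=; ring.
Qed.

Lemma isotropic_cross Q u v (k : 'I_3) :
  qf Q u = 0 -> qf Q v = 0 -> polar Q u v = 0 -> cross u v 0 k ^+ 2 * disc Q = 0.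
Proof. by move=> hu hv huv; rewrite disc_frame hu hv huv /gram_disc; ring. Qed.

Lemma cross_eq0 u v : cross u v = 0 -> forall i j, u 0 i * v 0 j = u 0 j * v 0 i.
Proof.
move/rowP => h; have := h 0; have := h 1; have := h 2; rewrite !mxE /= => h2 h1 h0 i j.
apply/eqP; rewrite -subr_eq0.
by case: (ord3P i) => ->; case: (ord3P j) => ->;
  rewrite ?subrr ?h0 ?h1 ?h2 // -opprB ?h0 ?h1 ?h2 oppr0.
Qed.

End QuadraticForms.

Lemma disc_map (R S : comNzRingType) (f : {rmorphism R -> S}) (Q : 'M[R]_3) :
  disc (map_mx f Q) = f (disc Q).
Proof.
by rewrite /disc /gram_disc !mxE !(rmorphB, rmorphD, rmorphM, rmorphXn, rmorph1); ring.
Qed.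

Section Conics.
Variable R : fieldType.
Implicit Types (Q : 'M[R]_3) (u v : 'rV[R]_3).

Lemma conjugate_points_eq Q u v : conic_nondeg Q -> u != 0 ->
  qf Q u = 0 -> qf Q v = 0 -> polar Q u v = 0 -> (v <= u)%MS.
Proof.
move=> hQ nu hu hv huv.
have cr0 : cross u v = 0.
  apply/rowP => k; rewrite [RHS]mxE; apply/eqP.
  have /eqP := isotropic_cross k hu hv huv.
  by rewrite mulf_eq0 (negbTE hQ) orbF expf_eq0.
have [i ui] : exists i, u 0 i != 0.
  apply/existsP; apply: contraR nu => /existsPn h.
  by apply/eqP/rowP => i; rewrite mxE; apply/eqP/negbNE.
have -> : v = (v 0 i / u 0 i) *: u.
  apply/rowP => j; rewrite !mxE mulrAC; apply: (mulIf ui).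
  by rewrite divfK // mulrC (cross_eq0 cr0) mulrC.
by rewrite scalemx_sub ?submx_refl.
Qed.

Lemma conic_secant Q u1 u2 (a b : R) : conic_nondeg Q -> u1 != 0 ->
  ~~ (u2 <= u1)%MS -> qf Q u1 = 0 -> qf Q u2 = 0 ->
  qf Q (a *: u1 + b *: u2) = 0 -> a = 0 \/ b = 0.
Proof.
move=> hQ nu1 u21 h1 h2; rewrite qf_comb h1 h2 !mulr0 !add0r.
move/eqP; rewrite !mulf_eq0 => /orP [/orP [/eqP a0 | /eqP b0] | /eqP p0];
  [by left | by right |].
by move: u21; rewrite (conjugate_points_eq hQ nu1 h1 h2 p0).
Qed.

Lemma conic_line_two_points Q (c : 'cV[R]_3) u1 u2 w :
  conic_nondeg Q -> c != 0 -> u1 != 0 -> ~~ (u2 <= u1)%MS ->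
  qf Q u1 = 0 -> qf Q u2 = 0 -> qf Q w = 0 ->
  u1 *m c = 0 -> u2 *m c = 0 -> w *m c = 0 ->
  (w <= u1)%MS \/ (w <= u2)%MS.
Proof.
move=> hQ nc nu1 u21 q1 q2 qw c1 c2 cw.
have := sub_kernel_plane nc (rank_col_mx2 nu1 u21) c1 c2 cw.
case/sub_col_mx2 => a [b hw]; move: qw; rewrite hw.
case/(conic_secant hQ nu1 u21 q1 q2) => ->; rewrite scale0r ?addr0 ?add0r.
  by right; rewrite scalemx_sub ?submx_refl.
by left; rewrite scalemx_sub ?submx_refl.
Qed.

End Conics.

Section Frobenius.
Variables (F : finFieldType) (K : fieldExtType F).

Lemma emb_is_zmod_morphism : zmod_morphism (@emb F K).
Proof. by move=> x y; rewrite /emb rmorphB. Qed.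
Lemma emb_is_monoid_morphism : monoid_morphism (@emb F K).
Proof. by rewrite /emb; split=> [|x y]; rewrite ?rmorph1 ?rmorphM. Qed.
HB.instance Definition _ :=
  GRing.isZmodMorphism.Build F K (@emb F K) emb_is_zmod_morphism.
HB.instance Definition _ :=
  GRing.isMonoidMorphism.Build F K (@emb F K) emb_is_monoid_morphism.

(* conjK is additive: #|F| = p ^ n with p the characteristic, so conjK is
   the n-th iterate of the Frobenius map x |-> x ^+ p *)
Lemma conjKD (x y : K) : conjK (x + y) = conjK x + conjK y.
Proof.
rewrite /conjK; have [p _ pcharF] := finPcharP F.
have -> : #|F| = #|pPrimeCharType pcharF| by [].
rewrite (card_pprimeChar pcharF).
have pK : p \in [pchar K] by rewrite (pchar_lalg K).
elim: (logn _ _) => [|n IHn]; first by rewrite !expr1.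
by rewrite expnSr !exprM IHn -!(pFrobenius_autE pK) rmorphD.
Qed.

Lemma conjK_is_zmod_morphism : zmod_morphism (@conjK F K).
Proof. by move=> x y; apply: (addIr (conjK y)); rewrite -conjKD !subrK. Qed.
Lemma conjK_is_monoid_morphism : monoid_morphism (@conjK F K).
Proof. by rewrite /conjK; split=> [|x y]; rewrite ?expr1n ?exprMn. Qed.
HB.instance Definition _ :=
  GRing.isZmodMorphism.Build K K (@conjK F K) conjK_is_zmod_morphism.
HB.instance Definition _ :=
  GRing.isMonoidMorphism.Build K K (@conjK F K) conjK_is_monoid_morphism.

(* F is fixed by conjugation, and nothing else is (Fermat's little theorem
   for the subfield F of K) *)
Lemma conjK_emb (a : F) : conjK (emb a : K) = emb a.
Proof. by rewrite /conjK -rmorphXn expf_card. Qed.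

Lemma conjK_fixed (x : K) : conjK x = x -> exists a, x = emb a.
Proof.
move=> hx; have : x \in (1%AS : {subfield K}).
  by rewrite Fermat's_little_theorem dimv1 expn1 -/(conjK x) hx.
by case/vlineP=> a ->; exists a; rewrite /emb /= -in_algE.
Qed.

Lemma conjv_embm m n (X : 'M[F]_(m, n)) : conjv (embm X : 'M[K]_(m, n)) = embm X.
Proof. by apply/matrixP => i j; rewrite !mxE conjK_emb. Qed.

Lemma embmM m n p (X : 'M[F]_(m, n)) (Y : 'M[F]_(n, p)) :
  embm (X *m Y) = embm X *m embm Y :> 'M[K]_(m, p).
Proof. exact: map_mxM. Qed.

Lemma conjvM m n p (X : 'M[K]_(m, n)) (Y : 'M[K]_(n, p)) :
  conjv (X *m Y) = conjv X *m conjv Y.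
Proof. exact: map_mxM. Qed.

Lemma emb_scale (a : F) (x : K) : emb a * x = a *: x.
Proof. by rewrite /emb mulr_algl. Qed.

Lemma nondeg_embm (Q : 'M[F]_3) : conic_nondeg Q -> conic_nondeg (embm Q : 'M[K]_3).
Proof. by rewrite !conic_nondegE /embm disc_map fmorph_eq0. Qed.

End Frobenius.

Section Coordinates.
Variables (F : finFieldType) (K : fieldExtType F) (e : 2.-tuple K).
Hypothesis he : basis_of fullv e.

Local Notation e0 := (tnth e ord0).
Local Notation e1 := (tnth e ord_max).
Local Notation c0 := (c0 e).
Local Notation c1 := (c1 e).

Lemma coordE (x : K) : x = c0 x *: e0 + c1 x *: e1.
Proof.
rewrite {1}(coord_basis he (memvf x)) sum2E !(tnth_nth 0).
by congr (coord _ _ _ *: _ + coord _ _ _ *: _); apply: val_inj.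
Qed.

Lemma c0_comb (a b : F) : c0 (a *: e0 + b *: e1) = a.
Proof.
have fe := basis_free he; rewrite /Defs.c0 linearD !linearZ /= !(tnth_nth 0).
by rewrite !(coord_free _ _ fe) /= mulr1 mulr0 addr0.
Qed.

Lemma c1_comb (a b : F) : c1 (a *: e0 + b *: e1) = b.
Proof.
have fe := basis_free he; rewrite /Defs.c1 linearD !linearZ /= !(tnth_nth 0).
by rewrite !(coord_free _ _ fe) /= mulr1 mulr0 add0r.
Qed.

Lemma e0_neq0 : e0 != 0.
Proof.
apply/eqP=> h; have := c0_comb 1 0; rewrite scale1r scale0r addr0 h.
by rewrite /Defs.c0 linear0 => /eqP; rewrite eq_sym oner_eq0.
Qed.

Definition delta := e0 * conjK e1 - e1 * conjK e0.

(* delta = 0 would make e1 / e0 conjugation-invariant, hence in F *)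
Lemma delta_neq0 : delta != 0.
Proof.
apply/eqP => /eqP; rewrite subr_eq0 => /eqP hd.
have : conjK (e1 / e0) = e1 / e0.
  rewrite fmorph_div; apply/eqP; rewrite eqr_div ?fmorph_eq0 ?e0_neq0 //.
  by rewrite mulrC hd mulrC.
case/conjK_fixed => a ha.
have := c1_comb 0 1; rewrite scale0r add0r scale1r.
have -> : e1 = a *: e0 + 0 *: e1 by rewrite scale0r addr0 -emb_scale -ha divfK ?e0_neq0.
by rewrite c1_comb => /eqP; rewrite eq_sym oner_eq0.
Qed.

(* [K : F] = 2, so conjugation is an involution *)
Lemma conjKK (x : K) : conjK (conjK x) = x.
Proof.
have := Fermat's_little_theorem (aspacef K) x.
rewrite memvf (size_basis he) /conjK -exprM.
by rewrite expnS expn1 => /esym/eqP.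
Qed.

Lemma conjvK m n (X : 'M[K]_(m, n)) : conjv (conjv X) = X.
Proof. by apply/matrixP => i j; rewrite !mxE conjKK. Qed.

(* The K-linear map Pi : K^5 -> K^3, (x0,x1,y0,y1,t) |-> (x0 e0 + x1 e1,
   y0 e0 + y1 e1, t), inverts the Bruck--Bose coordinatisation bbv; its
   conjugate conjv Pi sends bbv x y t to (x^q, y^q, t). *)
Definition piE (j : 'I_5) (k : 'I_3) : K :=
  match val j, val k with
  | 0%N, 0%N => e0 | 1%N, 0%N => e1 | 2%N, 1%N => e0 | 3%N, 1%N => e1
  | 4%N, 2%N => 1 | _, _ => 0 end.
Definition Pi : 'M[K]_(5, 3) := \matrix_(j, k) piE j k.

Definition row3 (a b c : K) : 'rV[K]_3 :=
  \row_(k < 3) match val k with 0%N => a | 1%N => b | _ => c end.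

Lemma row3E (a b c : K) :
  (row3 a b c 0 0 = a) * (row3 a b c 0 1 = b) * (row3 a b c 0 2 = c).
Proof. by rewrite !mxE. Qed.

Lemma mulPi (Z : 'rV[K]_5) :
  Z *m Pi = row3 (Z 0 0 * e0 + Z 0 1 * e1) (Z 0 2 * e0 + Z 0 3 * e1) (Z 0 4).
Proof.
apply/rowP => k; rewrite !mxE sum5E !mxE /piE /=.
by case: k => -[|[|[|k]]] //= _; ring.
Qed.

Lemma mulPic (Z : 'rV[K]_5) :
  Z *m conjv Pi = row3 (Z 0 0 * conjK e0 + Z 0 1 * conjK e1)
                       (Z 0 2 * conjK e0 + Z 0 3 * conjK e1) (Z 0 4).
Proof.
apply/rowP => k; rewrite !mxE sum5E !mxE /piE /=.
by case: k => -[|[|[|k]]] //= _; rewrite ?rmorph0 ?rmorph1; ring.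
Qed.

Lemma Pi_col2 (Z : 'rV[K]_5) : (Z *m Pi) 0 2 = Z 0 4.
Proof. by rewrite mulPi row3E. Qed.

Lemma row3_eq0 (a b c : K) : row3 a b c = 0 -> [/\ a = 0, b = 0 & c = 0].
Proof. by move/rowP=> h; have := h 0; have := h 1; have := h 2; rewrite !row3E !mxE. Qed.

Lemma bbvPi (x y : K) (t : F) : embm (bbv e x y t) *m Pi = row3 x y (emb t).
Proof. by rewrite mulPi !mxE !emb_scale -!coordE. Qed.

Lemma bbvPic (x y : K) (t : F) :
  embm (bbv e x y t) *m conjv Pi = row3 (conjK x) (conjK y) (emb t).
Proof.
rewrite -[embm _]conjv_embm -map_mxM bbvPi.
by apply/rowP => k; rewrite !mxE; case: k => -[|[|[|k]]] //=; rewrite conjK_emb.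
Qed.

Lemma bbv_Pi (v : 'rV[F]_5) :
  v = bbv e ((embm v *m Pi) 0 0) ((embm v *m Pi) 0 1) (v 0 4).
Proof.
rewrite mulPi !mxE !emb_scale.
apply/rowP => k; rewrite !mxE.
by case: k => -[|[|[|[|[|k]]]]] //= hk; rewrite ?c0_comb ?c1_comb;
  congr (v 0 _); apply: val_inj.
Qed.

Lemma bbvZ (a : F) (x y : K) (t : F) :
  a *: bbv e x y t = bbv e (a *: x) (a *: y) (a * t).
Proof.
apply/rowP => k; rewrite !mxE /Defs.c0 /Defs.c1 !linearZ.
by case: k => -[|[|[|[|[|k]]]]].
Qed.

(* Cramer's rule for the system with determinant delta *)
Lemma delta_solve (a b : K) :
  a * e0 + b * e1 = 0 -> a * conjK e0 + b * conjK e1 = 0 -> a = 0 /\ b = 0.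
Proof.
move=> h hc; have dn := delta_neq0.
have ha : a * delta =
    (a * e0 + b * e1) * conjK e1 - (a * conjK e0 + b * conjK e1) * e1.
  by rewrite /delta; ring.
have hb : b * delta =
    (a * conjK e0 + b * conjK e1) * e0 - (a * e0 + b * e1) * conjK e0.
  by rewrite /delta; ring.
rewrite h hc !mul0r subrr in ha hb.
by split; apply/eqP; rewrite -(mulIr_eq0 _ (mulIf dn)) ?ha ?hb.
Qed.

Lemma Pi_inj (Z : 'rV[K]_5) : Z *m Pi = 0 -> Z *m conjv Pi = 0 -> Z = 0.
Proof.
rewrite mulPi mulPic => /row3_eq0 [a0 a1 a2] /row3_eq0 [b0 b1 _].
have [z0 z1] := delta_solve a0 b0; have [z2 z3] := delta_solve a1 b1.
by apply/rowP => k; rewrite mxE; case: k => -[|[|[|[|[|k]]]]] //= hk;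
  [rewrite -z0 | rewrite -z1 | rewrite -z2 | rewrite -z3 | rewrite -a2];
  congr (Z 0 _); apply: val_inj.
Qed.

Lemma mulmx5_Pic (Z : 'rV[K]_5) (x : K) : Z 0 4 = 0 ->
  Z *m embm (mulmx5 e x) *m conjv Pi = conjK x *: (Z *m conjv Pi).
Proof.
move=> hZ; rewrite [in RHS]mulPic {1}(mulmx_sum_row Z) mulmx_suml sum5E.
rewrite -!scalemxAl -!map_row !rowK /mulrow /= !bbvPic map_mx0 mul0mx.
apply/rowP => k; rewrite !mxE hZ.
by case: k => -[|[|[|k]]] //= _; rewrite ?rmorph0 ?rmorphM; ring.
Qed.

Lemma exists_nonfixed : exists x : K, conjK x != x.
Proof.
case: (eqVneq (conjK e0) e0) => [h0|]; last by exists e0.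
case: (eqVneq (conjK e1) e1) => [h1|]; last by exists e1.
by have := delta_neq0; rewrite /delta h0 h1 mulrC subrr eqxx.
Qed.

Lemma g_Pic (P : 'rV[K]_5) : in_g e P -> P *m conjv Pi = 0.
Proof.
case=> hP4 hPx; have [x hx] := exists_nonfixed.
have : (conjK x - x) *: (P *m conjv Pi) = 0.
  by rewrite scalerBl -mulmx5_Pic // hPx -scalemxAl subrr.
by move/eqP; rewrite scalemx_eq0 subr_eq0 (negbTE hx) => /eqP.
Qed.

Lemma conj_Pi (Z : 'rV[K]_5) : Z *m conjv Pi = 0 -> conjv Z *m Pi = 0.
Proof. by move=> h; rewrite -[Pi]conjvK -map_mxM h map_mx0. Qed.

Lemma row_spreadline (i : 'I_2) (X : 'rV[K]_3) :
  row i (embm (spreadline e X) : 'M[K]_(2, 5)) =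
  embm (bbv e (tnth e i * X 0 0) (tnth e i * X 0 1) 0).
Proof. by rewrite -map_row rowK. Qed.

Lemma spread_row_Pi (a : K) (X : 'rV[K]_3) : X 0 2 = 0 ->
  embm (bbv e (a * X 0 0) (a * X 0 1) 0) *m Pi = a *: X.
Proof.
move=> hX; rewrite bbvPi; apply/rowP => k; rewrite !mxE.
by case: (ord3P k) => ->; rewrite ?mxE /= ?hX ?rmorph0 ?mulr0.
Qed.

Lemma spread_row_Pic (a : K) (X : 'rV[K]_3) : X 0 2 = 0 ->
  embm (bbv e (a * X 0 0) (a * X 0 1) 0) *m conjv Pi = conjK a *: conjv X.
Proof.
move=> hX; rewrite bbvPic; apply/rowP => k; rewrite !mxE.
by case: (ord3P k) => ->; rewrite ?mxE /= ?hX ?rmorph0 ?mulr0 ?rmorphM.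
Qed.

Lemma spreadline_Pi (r : 'rV[K]_2) (X : 'rV[K]_3) : X 0 2 = 0 ->
  r *m embm (spreadline e X) *m Pi = (r 0 0 * e0 + r 0 1 * e1) *: X.
Proof.
move=> hX; rewrite {1}(mulmx_sum_row r) mulmx_suml sum2E -!scalemxAl.
rewrite !row_spreadline !spread_row_Pi // !scalerA scalerDl !(tnth_nth 0).
by congr ((r 0 0 * _) *: X + (r 0 1 * _) *: X); apply: val_inj.
Qed.

Lemma spreadline_Pic (r : 'rV[K]_2) (X : 'rV[K]_3) : X 0 2 = 0 ->
  r *m embm (spreadline e X) *m conjv Pi =
  (r 0 0 * conjK e0 + r 0 1 * conjK e1) *: conjv X.
Proof.
move=> hX; rewrite {1}(mulmx_sum_row r) mulmx_suml sum2E -!scalemxAl.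
rewrite !row_spreadline !spread_row_Pic // !scalerA scalerDl !(tnth_nth 0).
by congr ((r 0 0 * conjK _) *: conjv X + (r 0 1 * conjK _) *: conjv X); apply: val_inj.
Qed.

Lemma sub_spreadline (Z : 'rV[K]_5) (X : 'rV[K]_3) (l : K) :
  Z *m conjv Pi = 0 -> X 0 2 = 0 -> Z *m Pi = l *: X ->
  (Z <= embm (spreadline e X))%MS.
Proof.
move=> hZc hX hZ.
pose r : 'rV[K]_2 := \row_(i < 2) (if i == 0 then conjK e1 else - conjK e0).
have [r0 r1] : r 0 0 = conjK e1 /\ r 0 1 = - conjK e0 by rewrite !mxE.
set S := embm (spreadline e X).
have hPi : r *m S *m Pi = delta *: X.
  by rewrite spreadline_Pi // r0 r1 /delta; congr (_ *: _); ring.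
have hPic : r *m S *m conjv Pi = 0.
  by rewrite spreadline_Pic // r0 r1 mulNr mulrC addrN scale0r.
have : Z - (l / delta) *: (r *m S) = 0.
  apply: Pi_inj; rewrite mulmxBl -scalemxAl ?hPi ?hPic.
    by rewrite hZ scalerA divfK ?delta_neq0 // subrr.
  by rewrite hZc scaler0 subrr.
by move/eqP; rewrite subr_eq0 => /eqP ->; rewrite scalemxAl submxMl.
Qed.

Lemma bar_ofE (P : 'rV[K]_5) (X : 'rV[K]_3) :
  in_g e P -> P != 0 -> X != 0 -> X 0 2 = 0 ->
  bar_of e X P <-> (X <= P *m Pi)%MS.
Proof.
move=> gP nP nX hX; have hPc := g_Pic gP.
have nPi : P *m Pi != 0 by apply: contraNneq nP => hP; apply/eqP/Pi_inj.
split => [/submxP [r hr] | /sub_rV_scale [k hk]].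
  apply: rV_sub_sym => //; rewrite hr spreadline_Pi //.
  by rewrite scalemx_sub ?submx_refl.
have nk : k != 0 by apply: contraNneq nX => k0; rewrite hk k0 scale0r.
by apply: (sub_spreadline (l := k^-1)) => //; rewrite hk scalerA mulVf ?scale1r.
Qed.

Lemma spreadline_sub_conj (P : 'rV[K]_5) : P *m conjv Pi = 0 -> P 0 4 = 0 ->
  (embm (spreadline e (P *m Pi)) <= P + conjv P)%MS.
Proof.
move=> hPc hP4; set X := P *m Pi.
have hX : X 0 2 = 0 by rewrite Pi_col2.
have hPcPic : conjv P *m conjv Pi = conjv X by rewrite -map_mxM.
apply/row_subP => i; rewrite row_spreadline.
have -> : embm (bbv e (tnth e i * X 0 0) (tnth e i * X 0 1) 0) =
          tnth e i *: P + conjK (tnth e i) *: conjv P.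
  apply/eqP; rewrite -subr_eq0; apply/eqP.
  apply: Pi_inj; rewrite mulmxBl mulmxDl -!scalemxAl.
    by rewrite spread_row_Pi // conj_Pi // scaler0 addr0 subrr.
  by rewrite spread_row_Pic // hPc hPcPic scaler0 add0r subrr.
by rewrite addmx_sub_adds ?scalemx_sub ?submx_refl.
Qed.

Lemma g_Pi_indep (P Q : 'rV[K]_5) : in_g e P -> in_g e Q ->
  \rank (col_mx P Q) = 2%N -> ~~ (Q *m Pi <= P *m Pi)%MS.
Proof.
move=> gP gQ rPQ; apply/negP => /sub_rV_scale [k hk].
have : Q - k *: P = 0.
  apply: Pi_inj; rewrite mulmxBl -scalemxAl ?hk ?g_Pic // ?scaler0 subrr //.
have /mxrankS : (col_mx P (k *: P) <= P)%MS by rewrite col_mx_sub submx_refl scalemx_sub.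
move=> rk /eqP; rewrite subr_eq0 => /eqP hQ.
by move: rk; rewrite -hQ rPQ rank_rV; case: (P != 0).
Qed.

End Coordinates.

Section BaerSubplane.
Variables (F : finFieldType) (K : fieldExtType F) (e : 2.-tuple K).
Hypothesis he : basis_of fullv e.
Variable A : 'M[F]_(3, 5).
Hypothesis hA : \rank A = 3%N.
Hypothesis hAinf : exists u : 'rV[F]_3, (u *m A) 0 4 != 0.
Hypothesis hAspread : forall X : 'rV[K]_3, X != 0 -> X 0 2 = 0 ->
  ~~ (spreadline e X <= A)%MS.

Local Notation Pi := (Pi e).

(* the Baer subplane B is the image of PG(2,q) under w |-> w *m baerM:
   push the plane alpha = <A> through Pi *)
Definition baerM : 'M[K]_3 := embm A *m Pi.

Lemma embm_baerM (w : 'rV[F]_3) : embm w *m baerM = embm (w *m A) *m Pi.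
Proof. by rewrite mulmxA -embmM. Qed.

Lemma baerM_col2 (w : 'rV[F]_3) : (embm w *m baerM) 0 2 = emb ((w *m A) 0 4).
Proof. by rewrite embm_baerM Pi_col2 mxE. Qed.

(* if a K-point R of alpha^* were killed by Pi, the line R R^q would be the
   extended spread line over the point R^q *m Pi, so alpha would contain a
   spread line *)
Lemma baerM_unit : baerM \in unitmx.
Proof.
rewrite unitmxE unitfE; apply/negP => /det0P [z nz hz].
set R := z *m embm A; set P := conjv R.
have hR : R *m Pi = 0 by rewrite /R -mulmxA.
have hPc : P *m conjv Pi = 0 by rewrite /P -map_mxM hR map_mx0.
have hP4 : P 0 4 = 0 by rewrite mxE -(Pi_col2 e) hR mxE rmorph0.
have PR_A : (P + conjv P <= embm A)%MS.
  by rewrite (conjvK he) addsmx_sub /P /R conjvM conjv_embm !submxMl.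
case: (eqVneq (P *m Pi) 0) => [X0 | nX].
  have R0 : R = 0 by rewrite -[R](conjvK he) -/P (Pi_inj he X0 hPc); apply: map_mx0.
  move: nz; rewrite -(mulmx_free_eq0 _ (_ : row_free (embm A : 'M[K]_(3, 5)))).
    by rewrite -/R R0 eqxx.
  by rewrite /row_free mxrank_map hA.
move: (hAspread nX (etrans (Pi_col2 e P) hP4)); rewrite -(map_submx (@emb F K)).
by rewrite (submx_trans (spreadline_sub_conj he hPc hP4) PR_A).
Qed.

Lemma baerM_nz (z : 'rV[K]_3) : z != 0 -> z *m baerM != 0.
Proof. by move=> nz; rewrite mulmx_free_eq0 ?row_free_unit ?baerM_unit. Qed.

(* alpha meets Sigma_infinity in a line, giving two independent F-points
   of B on l_infinity *)
Lemma baer_secant : exists w1 w2 : 'rV[F]_3, \rank (col_mx w1 w2) = 2%N /\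
  (embm w1 *m baerM) 0 2 = 0 /\ (embm w2 *m baerM) 0 2 = 0.
Proof.
set c := col 4 A.
have infty (w : 'rV[F]_3) : (w <= kermx c)%MS -> (embm w *m baerM) 0 2 = 0.
  by rewrite sub_kermx mul_col_eq0 baerM_col2 => /eqP ->; rewrite rmorph0.
have nc : c != 0.
  by case: hAinf => u; apply: contraNneq => c0; rewrite -mul_col_eq0 -/c c0 mulmx0.
have rk : (1 < \rank (kermx c))%N by rewrite rank_kermx_col3.
have [w1 [w2 [h1 h2 r12]]] := two_indep_rows rk.
by exists w1, w2; rewrite !infty.
Qed.

Lemma normalised_scale (v x : 'rV[F]_5) (k : F) : v 0 4 = 1 -> v = k *: x ->
  x 0 4 != 0 /\ v = (x 0 4)^-1 *: x.
Proof.
move=> hv hvx; have hk : k * x 0 4 = 1 by rewrite -hv hvx mxE.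
have nx : x 0 4 != 0 by apply: contra_eq_neq hk => ->; rewrite mulr0 eq_sym oner_neq0.
by split => //; rewrite hvx -[k]mulr1 -(mulfV nx) mulrA hk mul1r.
Qed.

Lemma bbA_baerM (w : 'rV[F]_3) : (w *m A) 0 4 != 0 ->
  bbA e (embm w *m baerM) = ((w *m A) 0 4)^-1 *: (w *m A).
Proof.
move=> hs; rewrite /bbA baerM_col2 embm_baerM.
set v := w *m A; set s := v 0 4.
rewrite [in RHS](bbv_Pi he v) bbvZ -/s mulVf //.
by rewrite -!emb_scale -fmorphV ![emb _ * (embm v *m Pi) _ _]mulrC.
Qed.

Lemma baerM_affine (w : 'rV[F]_3) :
  (embm w *m baerM) 0 2 != 0 -> (w *m A) 0 4 != 0.
Proof. by apply: contra_neq => h0; rewrite baerM_col2 h0 rmorph0. Qed.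

Lemma baer_points (v : 'rV[F]_5) : v 0 4 = 1 ->
  ((v <= A)%MS <-> exists w : 'rV[F]_3,
     (embm w *m baerM) 0 2 != 0 /\ v = bbA e (embm w *m baerM)).
Proof.
move=> hv; split => [/submxP [w hw] | [w [h2 ->]]].
  have [hs hvw] := normalised_scale hv (etrans hw (esym (scale1r _))).
  by exists w; rewrite baerM_col2 fmorph_eq0 bbA_baerM.
by rewrite bbA_baerM ?baerM_affine // scalemxAl submxMl.
Qed.

Lemma baer_conic_points (Q : 'M[F]_3) (v : 'rV[F]_5) : v 0 4 = 1 ->
  ((exists u : 'rV[F]_3, [/\ u != 0, qf Q u = 0 & (v <= u *m A)%MS]) <->
   exists w : 'rV[F]_3, [/\ w != 0, qf Q w = 0,
                          (embm w *m baerM) 0 2 != 0 &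
                          v = bbA e (embm w *m baerM)]).
Proof.
move=> hv; split => [[u [nu qu /sub_rV_scale [k hk]]] | [w [nw qw h2 ->]]].
  have [hs hvu] := normalised_scale hv hk.
  by exists u; rewrite baerM_col2 fmorph_eq0 bbA_baerM.
by exists w; rewrite bbA_baerM ?baerM_affine // scalemx_sub ?submx_refl.
Qed.

Lemma baer_conic_spread (Q : 'M[F]_3) (X : 'rV[K]_3) : X != 0 -> X 0 2 = 0 ->
  (exists u : 'rV[F]_3, [/\ u != 0, qf Q u = 0 & (u *m A <= spreadline e X)%MS]) ->
  exists w : 'rV[F]_3, [/\ w != 0, qf Q w = 0 & (X <= embm w *m baerM)%MS].
Proof.
move=> nX hX [u [nu qu /submxP [r hr]]]; exists u; split => //.
have nz : embm u *m baerM != 0 by rewrite baerM_nz ?map_mx_eq0.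
apply: rV_sub_sym nz _; rewrite embm_baerM hr embmM spreadline_Pi //.
by rewrite scalemx_sub ?submx_refl.
Qed.

Lemma baerM_g_span (u : 'rV[K]_3) (P Q : 'rV[K]_5) : in_g e P -> in_g e Q ->
  (u *m embm A <= col_mx P (conjv Q))%MS -> exists a, u *m baerM = a *: (P *m Pi).
Proof.
move=> gP gQ /sub_col_mx2 [a [b hu]]; exists a.
by rewrite /baerM mulmxA hu mulmxDl -!scalemxAl (conj_Pi he (g_Pic he gQ)) scaler0 addr0.
Qed.

(* l_infinity is the line {z | z *m col 2 baerM = 0} of the plane of B *)
Lemma baerM_col2_neq0 : col 2 baerM != 0.
Proof.
case: hAinf => u; apply: contraNneq => c0.
have : (embm u *m baerM) 0 2 == 0 by rewrite -mul_col_eq0 c0 mulmx0.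
by rewrite baerM_col2 fmorph_eq0.
Qed.

Lemma baerM_infty (z : 'rV[K]_3) : (z *m baerM) 0 2 = 0 -> z *m col 2 baerM = 0.
Proof. by move=> h; apply/eqP; rewrite mul_col_eq0 h. Qed.

Lemma baer_conic_infinity (Qn : 'M[F]_3) (P Q : 'rV[K]_5) : conic_nondeg Qn ->
  P != 0 -> Q != 0 -> in_g e P -> in_g e Q -> \rank (col_mx P Q) = 2%N ->
  (exists u : 'rV[K]_3, [/\ u != 0, qf (embm Qn) u = 0 &
       (u *m embm A <= col_mx P (conjv Q))%MS]) ->
  (exists u : 'rV[K]_3, [/\ u != 0, qf (embm Qn) u = 0 &
       (u *m embm A <= col_mx (conjv P) Q)%MS]) ->
  forall X : 'rV[K]_3, X != 0 -> X 0 2 = 0 ->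
    ((exists w : 'rV[K]_3, [/\ w != 0, qf (embm Qn) w = 0 &
                               (X <= w *m baerM)%MS]) <->
     (bar_of e X P \/ bar_of e X Q)).
Proof.
move=> hQn nP nQ gP gQ rPQ [u1 [nu1 q1 h1]] [u2 [nu2 q2 h2]] X nX hX.
rewrite (bar_ofE he gP nP nX hX) (bar_ofE he gQ nQ nX hX).
have [a ha] := baerM_g_span gP gQ h1.
have [b hb] : exists b, u2 *m baerM = b *: (Q *m Pi).
  by apply: baerM_g_span gQ gP _; rewrite col_mx_subC.
have na : a != 0 by apply: contraNneq (baerM_nz nu1); rewrite ha => ->; rewrite scale0r.
have nb : b != 0 by apply: contraNneq (baerM_nz nu2); rewrite hb => ->; rewrite scale0r.
have hu1 : (u1 *m baerM :=: P *m Pi)%MS by rewrite ha; apply: eqmx_scale.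
have hu2 : (u2 *m baerM :=: Q *m Pi)%MS by rewrite hb; apply: eqmx_scale.
split => [[w [nw qw hXw]] | [hXP | hXQ]]; last 2 first.
- by exists u1; rewrite hu1.
- by exists u2; rewrite hu2.
have u21 : ~~ (u2 <= u1)%MS.
  by apply: contra (g_Pi_indep he gP gQ rPQ) => /(submxMr baerM); rewrite hu1 hu2.
have g_infty (Z : 'rV[K]_5) c : in_g e Z -> (c *: (Z *m Pi)) 0 2 = 0.
  by case=> hZ4 _; rewrite mxE Pi_col2 hZ4 mulr0.
have c1 : u1 *m col 2 baerM = 0 by apply: baerM_infty; rewrite ha g_infty.
have c2 : u2 *m col 2 baerM = 0 by apply: baerM_infty; rewrite hb g_infty.
have cw := baerM_infty (rV_sub_entry0 nX hXw hX).
have [hw | hw] := conic_line_two_points (nondeg_embm K hQn) baerM_col2_neq0 nu1 u21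
  q1 q2 qw c1 c2 cw; [left; rewrite -hu1 | right; rewrite -hu2];
  exact: submx_trans hXw (submxMr _ hw).
Qed.

End BaerSubplane.

Unset Implicit Arguments.

Theorem theorem5p4
  (F : finFieldType) (K : fieldExtType F) (e : 2.-tuple K)
  (he : basis_of fullv e)
  (* the plane alpha of PG(4,q), spanned by the rows of A *)
  (A : 'M[F]_(3, 5)) (hA : \rank A = 3%N)
  (hAinf : exists u : 'rV[F]_3, (u *m A) 0 4 != 0)
  (hAspread : forall X : 'rV[K]_3, X != 0 -> X 0 2 = 0 ->
              ~~ (spreadline e X <= A)%MS)
  (* the non-degenerate conic N of alpha: points u *m A with qf Qn u = 0 *)
  (Qn : 'M[F]_3) (hQn : conic_nondeg Qn) :
  exists (M : 'M[K]_3) (Qc : 'M[F]_3),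
    (* (1) B = {embm w *m M : w in PG(2,q)} is a Baer subplane ... *)
    M \in unitmx /\
    (* ... secant to l_infinity (it has two distinct points on l_infinity) *)
    (exists w1 w2 : 'rV[F]_3, \rank (col_mx w1 w2) = 2%N /\
        (embm w1 *m M) 0 2 = 0 /\ (embm w2 *m M) 0 2 = 0) /\
    (* [B] = alpha *)
    (forall v : 'rV[F]_5, v 0 4 = 1 ->
       ((v <= A)%MS <->
        exists w : 'rV[F]_3, (embm w *m M) 0 2 != 0 /\
                             v = bbA e (embm w *m M))) /\
    (* C is an F_q-conic of B *)
    conic_nondeg Qc /\
    (* [C] = N *)
    (forall v : 'rV[F]_5, v 0 4 = 1 ->
       ((exists u : 'rV[F]_3, [/\ u != 0, qf Qn u = 0 & (v <= u *m A)%MS]) <->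
        exists w : 'rV[F]_3, [/\ w != 0, qf Qc w = 0,
                               (embm w *m M) 0 2 != 0 &
                               v = bbA e (embm w *m M)])) /\
    (* (2) *)
    (forall X : 'rV[K]_3, X != 0 -> X 0 2 = 0 ->
       (exists u : 'rV[F]_3, [/\ u != 0, qf Qn u = 0 &
                                 (u *m A <= spreadline e X)%MS]) ->
       exists w : 'rV[F]_3, [/\ w != 0, qf Qc w = 0 &
                                (X <= embm w *m M)%MS]) /\
    (* (3) *)
    (forall P Q : 'rV[K]_5,
       P != 0 -> Q != 0 -> in_g e P -> in_g e Q ->
       \rank (col_mx P Q) = 2%N ->
       (exists u : 'rV[K]_3, [/\ u != 0, qf (embm Qn) u = 0 &
            (u *m embm A <= col_mx P (conjv Q))%MS]) ->
       (exists u : 'rV[K]_3, [/\ u != 0, qf (embm Qn) u = 0 &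
            (u *m embm A <= col_mx (conjv P) Q)%MS]) ->
       forall X : 'rV[K]_3, X != 0 -> X 0 2 = 0 ->
         ((exists w : 'rV[K]_3, [/\ w != 0, qf (embm Qc) w = 0 &
                                    (X <= w *m M)%MS]) <->
          (bar_of e X P \/ bar_of e X Q))).
Proof.
exists (baerM e A), Qn; split; first exact: baerM_unit.
split; first exact: baer_secant.
split; first by move=> v; apply: baer_points.
split; first exact: hQn.
split; first by move=> v; apply: baer_conic_points.
split; first by move=> X; apply: baer_conic_spread.
by move=> P Q; apply: baer_conic_infinity.
Qed.
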